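(* Let $R$ be a discrete valuation ring with uniformizer $\pi$ and let $\Gamma$ be an abstract group. Assume that every $V\in\mathrm{Rep}_R(\Gamma)$ with $\pi V=0$ admits a weak lift. Then every $E\in\mathrm{Rep}_R(\Gamma)$ admits a weak lift; that is, $\Gamma$ is Tannakian over $R$.
   Context: $\mathrm{Rep}_R(\Gamma)$ is the category of left $R\Gamma$-modules which are finitely generated as $R$-modules; $\mathrm{Rep}^\circ_R(\Gamma)$ is the full subcategory of those which are projective (equivalently free) $R$-modules. A weak lift of $V\in\mathrm{Rep}_R(\Gamma)$ is an object $\widetilde V\in\mathrm{Rep}^\circ_R(\Gamma)$ together with a surjective morphism $\widetilde V\to V$ of $R\Gamma$-modules. $\Gamma$ is called Tannakian over $R$ if every object of $\mathrm{Rep}_R(\Gamma)$ admits a weak lift. *)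

From HB Require Import structures.
From mathcomp Require Import all_boot all_order all_algebra.
From mathcomp Require Import monoid.
Set Implicit Arguments. Unset Strict Implicit. Unset Printing Implicit Defensive.
Import GRing.Theory.
Local Open Scope ring_scope.

Definition is_DVR_uniformizer (R : idomainType) (pi : R) : Prop :=
  [/\ pi != 0, pi \isn't a GRing.unit &
      forall x : R, x != 0 ->
        exists (u : R) (n : nat), u \is a GRing.unit /\ x = u * pi ^+ n].

Definition Rlinear (R : idomainType) (M N : lmodType R) (f : M -> N) : Prop :=
  forall (a : R) (x y : M), f (a *: x + y) = a *: f x + f y.

Definition is_RGamma_action (R : idomainType) (G : groupType) (M : lmodType R)
    (rho : G -> M -> M) : Prop :=
  [/\ forall g, Rlinear (rho g),
      forall x, rho monoid.one x = x &
      forall g h x, rho (monoid.mul g h) x = rho g (rho h x)].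

Definition fin_gen (R : idomainType) (M : lmodType R) : Prop :=
  exists (n : nat) (v : 'I_n -> M),
    forall m : M, exists c : 'I_n -> R, m = \sum_(i < n) c i *: v i.

(* M is a free R-module of finite rank (for finitely generated modules over
   a DVR this is equivalent to projective). *)
Definition free_fin (R : idomainType) (M : lmodType R) : Prop :=
  exists (n : nat) (f : 'rV[R]_n -> M), Rlinear f /\ bijective f.

Definition in_Rep (R : idomainType) (G : groupType) (M : lmodType R)
    (rho : G -> M -> M) : Prop :=
  is_RGamma_action rho /\ fin_gen M.

Definition in_Rep0 (R : idomainType) (G : groupType) (M : lmodType R)
    (rho : G -> M -> M) : Prop :=
  in_Rep rho /\ free_fin M.

Definition is_weak_lift (R : idomainType) (G : groupType)
    (V : lmodType R) (rhoV : G -> V -> V)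
    (W : lmodType R) (rhoW : G -> W -> W) (f : W -> V) : Prop :=
  [/\ in_Rep0 rhoW, Rlinear f,
      (forall g x, f (rhoW g x) = rhoV g (f x)) & forall y : V, exists x : W, f x = y].

Definition has_weak_lift (R : idomainType) (G : groupType)
    (V : lmodType R) (rhoV : G -> V -> V) : Prop :=
  exists (W : lmodType R) (rhoW : G -> W -> W) (f : W -> V),
    is_weak_lift rhoV rhoW f.

Definition Tannakian (R : idomainType) (G : groupType) : Prop :=
  forall (V : lmodType R) (rho : G -> V -> V), in_Rep rho -> has_weak_lift rho.

From HB Require Import structures.
From mathcomp Require Import all_boot all_order all_algebra.
From mathcomp Require Import monoid boolp.
Set Implicit Arguments. Unset Strict Implicit. Unset Printing Implicit Defensive.
Import GRing.Theory.
Local Open Scope ring_scope.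
Local Open Scope quotient_scope.

(* Induction on the least N such that pi^N kills the pi-power torsion of E,
   which exists because E is finitely generated over a DVR. For N = 0, E is
   torsion free, hence free, and is its own weak lift. Otherwise take a weak
   lift W -> E/piE of the reduction of E and form the fibre product
   P = W x_(E/piE) E, which surjects onto E. As W is free, the torsion of P lies
   in 0 x piE, so pi^(N-1) kills it; a weak lift of P, given by induction,
   composed with P -> E is a weak lift of E. *)

(* [Rlinear f] is convertible to [linear f], so an [Rlinear] map can be packed
   as a [{linear _ -> _}] and handled by the library's theory of linear maps. *)
Definition linear_of (R : idomainType) (M N : lmodType R) (f : M -> N)
    (hf : Rlinear f) : {linear M -> N} :=
  HB.pack f (GRing.isLinear.Build R M N *:%R f hf).

Section RlinearTheory.
Variables (R : idomainType) (M N : lmodType R) (f : M -> N) (hf : Rlinear f).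

Lemma Rlinear0 : f 0 = 0.
Proof. exact: (linear0 (linear_of hf)). Qed.

Lemma RlinearB x y : f (x - y) = f x - f y.
Proof. exact: (linearB (linear_of hf)). Qed.

Lemma RlinearZ a x : f (a *: x) = a *: f x.
Proof. exact: (linearZ_LR (linear_of hf)). Qed.

Lemma Rlinear_comb n (c : 'I_n -> R) (v : 'I_n -> M) :
  f (\sum_(i < n) c i *: v i) = \sum_(i < n) c i *: f (v i).
Proof.
change (linear_of hf (\sum_(i < n) c i *: v i) = \sum_(i < n) c i *: f (v i)).
rewrite linear_sum.
by apply: eq_bigr => i _; exact: linearZ_LR.
Qed.

End RlinearTheory.

Section ModPi.
Variables (R : idomainType) (E : lmodType R) (pi : R).

Definition multiples : {pred E} := fun x => `[< exists z, x = pi *: z >].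

Lemma multiplesP x : reflect (exists z, x = pi *: z) (x \in multiples).
Proof. exact: asboolP. Qed.

Lemma multiples_submod_closed : submod_closed multiples.
Proof.
split; first by apply/multiplesP; exists 0; rewrite scaler0.
move=> a _ _ /multiplesP[x ->] /multiplesP[y ->]; apply/multiplesP.
by exists (a *: x + y); rewrite scalerDr !scalerA mulrC.
Qed.

HB.instance Definition _ := GRing.isSubmodClosed.Build R E multiples
  (GRing.submod_closed_semi multiples_submod_closed).

Local Notation Q := (Quotient.quot multiples).

Definition scale_mod_pi (a : R) : Q -> Q := lift_op1 Q ( *:%R a).

Lemma pi_scale_mod_pi a : {morph \pi_Q : x / a *: x >-> scale_mod_pi a x}.
Proof.
move=> x; unlock scale_mod_pi; apply/eqP; rewrite piE /Quotient.equiv.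
by rewrite -scalerBr rpredZ // Quotient.idealrBE reprK.
Qed.
Canonical pi_scale_mod_pi_morph a := PiMorph1 (pi_scale_mod_pi a).

Lemma scale_mod_piA a b q : scale_mod_pi a (scale_mod_pi b q) = scale_mod_pi (a * b) q.
Proof. by rewrite -[q]reprK !piE scalerA. Qed.

Lemma scale_mod_pi1 : left_id 1 scale_mod_pi.
Proof. by move=> q; rewrite -[q]reprK !piE scale1r. Qed.

Lemma scale_mod_piDr : right_distributive scale_mod_pi +%R.
Proof. by move=> a q r; rewrite -[q]reprK -[r]reprK !piE scalerDr. Qed.

Lemma scale_mod_piDl q : {morph scale_mod_pi^~ q : a b / a + b}.
Proof. by move=> a b; rewrite -[q]reprK !piE scalerDl. Qed.

HB.instance Definition _ := GRing.Zmodule_isLmodule.Build R Q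
  scale_mod_piA scale_mod_pi1 scale_mod_piDr scale_mod_piDl.

Definition reduce : E -> Q := \pi_Q.

Lemma reduce_is_linear : linear reduce.
Proof. by move=> a x y; rewrite /reduce !piE. Qed.

HB.instance Definition _ :=
  GRing.isLinear.Build R E Q *:%R reduce reduce_is_linear.

Lemma reduceK : cancel repr reduce.
Proof. exact: reprK. Qed.

Lemma reduce_eq0 x : reduce x = 0 <-> exists z, x = pi *: z.
Proof.
split=> [h | hx].
- apply/multiplesP; rewrite -[x]subr0 Quotient.idealrBE.
  by change (reduce x == reduce 0); rewrite h linear0.
- rewrite -(linear0 reduce); apply/eqP; change (x == 0 %[mod Q]).
  by rewrite -Quotient.idealrBE subr0; apply/multiplesP.
Qed.

Lemma scale_pi_mod_pi (q : Q) : pi *: q = 0.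
Proof. by rewrite -[q]reduceK -linearZ; apply/reduce_eq0; exists (repr q). Qed.

End ModPi.

Notation mod_pi E pi := (Quotient.quot (@multiples _ E pi)).

Section Pullback.
Variables (R : pzRingType) (W E Q : lmodType R).
Variables (f : {linear W -> Q}) (g : {linear E -> Q}).

Definition pullback_pred : {pred W * E} := fun p => f p.1 == g p.2.

Lemma in_pullback p : (p \in pullback_pred) = (f p.1 == g p.2).
Proof. by []. Qed.

Lemma pullback_submod_closed : submod_closed pullback_pred.
Proof.
split; first by rewrite in_pullback /= !linear0.
move=> a [w1 e1] [w2 e2]; rewrite !in_pullback /= => /eqP h1 /eqP h2.
by rewrite !linearP h1 h2.
Qed.

HB.instance Definition _ := GRing.isSubmodClosed.Build R (W * E)%type
  pullback_pred (GRing.submod_closed_semi pullback_submod_closed).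

Definition pullback := {p : W * E | p \in pullback_pred}.
HB.instance Definition _ :=
  [isSub for @sval _ (fun p => p \in pullback_pred) : pullback -> _].
HB.instance Definition _ := [Choice of pullback by <:].
HB.instance Definition _ := [SubChoice_isSubLmodule of pullback by <:].

Definition pullback_elt p (hp : p \in pullback_pred) : pullback := exist _ p hp.

Definition pullback_fst (p : pullback) : W := (val p).1.
Definition pullback_snd (p : pullback) : E := (val p).2.

Lemma pullback_snd_is_linear : linear pullback_snd. Proof. by []. Qed.

End Pullback.

Section FinGen.
Variable R : idomainType.
Implicit Types M N K P : lmodType R.

Definition spanned M n (v : 'I_n -> M) (x : M) :=
  exists c : 'I_n -> R, x = \sum_(i < n) c i *: v i.

Lemma fin_gen_image M N (h : M -> N) : Rlinear h ->
  (forall y, exists x, h x = y) -> fin_gen M -> fin_gen N.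
Proof.
move=> hlin hsurj [n [v hv]]; exists n, (h \o v) => y.
have [x <-] := hsurj y; have [c ->] := hv x.
by exists c; rewrite (Rlinear_comb hlin).
Qed.

Lemma fin_gen_cat M m n (u : 'I_m -> M) (t : 'I_n -> M) :
  (forall x, exists a b, x = \sum_(j < m) a j *: u j + \sum_(i < n) b i *: t i) ->
  fin_gen M.
Proof.
move=> h; exists (m + n)%N, (fun k => match split k with inl j => u j | inr i => t i end).
move=> x; have [a [b ->]] := h x.
exists (fun k => match split k with inl j => a j | inr i => b i end).
by rewrite big_split_ord /=; congr (_ + _); apply: eq_bigr => i _;
  rewrite ?(unsplitK (inl i)) ?(unsplitK (inr i)).
Qed.

Lemma fin_gen_extension K P N (k : K -> P) (h : P -> N) :
  Rlinear k -> Rlinear h -> (forall y, exists x, h x = y) ->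
  (forall x, h x = 0 -> exists z, x = k z) ->
  fin_gen K -> fin_gen N -> fin_gen P.
Proof.
move=> klin hlin hsurj hker [m [u hu]] [n [v hv]].
have [s hs] := choice hsurj.
apply: (fin_gen_cat (u := s \o v) (t := k \o u)) => x.
have [a ha] := hv (h x).
have [|z /eqP] := hker (x - \sum_(i < n) a i *: s (v i)).
  rewrite (RlinearB hlin) (Rlinear_comb hlin) ha; apply/eqP; rewrite subr_eq0.
  by apply/eqP/eq_bigr => i _; rewrite hs.
rewrite subr_eq => /eqP ->; have [b ->] := hu z.
by exists a, b; rewrite (Rlinear_comb klin) addrC.
Qed.

End FinGen.

Section DVR.
Variables (R : idomainType) (pi : R).
Hypothesis hR : is_DVR_uniformizer pi.

Lemma expf_pi_neq0 k : pi ^+ k != 0.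
Proof. by case: hR => pi_neq0 _ _; rewrite expf_neq0. Qed.

Lemma dvr_dvd_total (a b : R) : (exists d, b = d * a) \/ (exists d, a = d * b).
Proof.
have [->|a0] := eqVneq a 0; first by right; exists 0; rewrite mul0r.
have [->|b0] := eqVneq b 0; first by left; exists 0; rewrite mul0r.
case: hR => _ _ hfact.
have [u [m [hu ->]]] := hfact a a0; have [w [k [hw ->]]] := hfact b b0.
wlog le_mk : u w m k hu hw / (m <= k)%N.
  move=> H; case: (leqP m k) => [|/ltnW] le; first exact: H.
  by rewrite or_comm; apply: H.
left; exists (w / u * pi ^+ (k - m)).
by rewrite mulrACA mulrVK // -exprD subnK.
Qed.

Lemma dvr_min_coef n (c : 'I_n -> R) i0 : c i0 != 0 ->
  exists2 j, c j != 0 & forall i, exists d, c i = d * c j.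
Proof.
move=> ci0.
suff [j cj0 hj] : exists2 j, c j != 0 &
    forall i, i \in enum 'I_n -> exists d, c i = d * c j.
  by exists j => // i; apply: hj; rewrite mem_enum.
elim: (enum 'I_n) => [|i s [j cj0 hj]]; first by exists i0.
have [[d hd]|[d hd]] := dvr_dvd_total (c j) (c i).
- by exists j => // i'; rewrite inE => /predU1P [->|/hj]; first by exists d.
- have ci0' : c i != 0 by apply: contraNneq cj0 => ci0'; rewrite hd ci0' mulr0.
  exists i => // i'; rewrite inE => /predU1P [->|/hj [d' ->]].
    by exists 1; rewrite mul1r.
  by exists (d' * d); rewrite hd mulrA.
Qed.

End DVR.

Section Torsion.
Variables (R : idomainType) (E : lmodType R).

Definition torsion_free := forall (a : R) (x : E), a != 0 -> a *: x = 0 -> x = 0.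

Definition pi_torsion_bound (pi : R) (N : nat) :=
  forall (x : E) k, pi ^+ k *: x = 0 -> pi ^+ N *: x = 0.

Lemma free_torsion_free : free_fin E -> torsion_free.
Proof.
case=> n [phi [philin [psi phiK psiK]]] a x a0 hax.
have hpsi : a *: psi x = 0.
  by rewrite -[a *: psi x]phiK (RlinearZ philin) psiK hax -(Rlinear0 philin) phiK.
have psix0 : psi x = 0.
  apply/rowP => i; have /rowP/(_ i)/eqP := hpsi.
  by rewrite !mxE mulf_eq0 (negPf a0) => /eqP.
by rewrite -[x]psiK psix0 (Rlinear0 philin).
Qed.

Lemma torsion_free_of_bound0 (pi : R) :
  is_DVR_uniformizer pi -> pi_torsion_bound pi 0 -> torsion_free.
Proof.
case=> _ _ hfact hb a x a0 hax; have [u [k [hu ea]]] := hfact a a0.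
suff /hb : pi ^+ k *: x = 0 by rewrite scale1r.
by rewrite -[pi ^+ k](mulKr hu) -ea -scalerA hax scaler0.
Qed.

Lemma spanD n (v : 'I_n -> E) x y : spanned v x -> spanned v y -> spanned v (x + y).
Proof.
case=> c -> [d ->]; exists (fun i => c i + d i).
by rewrite -big_split; apply: eq_bigr => i _; rewrite scalerDl.
Qed.

Lemma spanZ n (v : 'I_n -> E) a x : spanned v x -> spanned v (a *: x).
Proof.
case=> c ->; exists (fun i => a * c i).
by rewrite scaler_sumr; apply: eq_bigr => i _; rewrite scalerA.
Qed.

Lemma spanN n (v : 'I_n -> E) x : spanned v x -> spanned v (- x).
Proof. by rewrite -scaleN1r; apply: spanZ. Qed.

Lemma spanned_recr n (v : 'I_n.+1 -> E) x : spanned v x ->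
  exists y d, spanned (fun i => v (widen_ord (leqnSn n) i)) y /\
              x = y + d *: v ord_max.
Proof.
case=> c ->; rewrite big_ord_recr /=.
exists (\sum_(i < n) c (widen_ord (leqnSn n) i) *: v (widen_ord (leqnSn n) i)).
by exists (c ord_max); split => //; exists (fun i => c (widen_ord (leqnSn n) i)).
Qed.

(* If some pi^j v_n lies in the span of the earlier generators the bound grows
   by j; if no nonzero multiple of v_n lies there it does not grow. *)
Lemma spanned_torsion_bound (pi : R) : is_DVR_uniformizer pi -> forall n (v : 'I_n -> E),
  exists N, forall x, spanned v x -> forall k, pi ^+ k *: x = 0 -> pi ^+ N *: x = 0.
Proof.
move=> hR; elim=> [|n IH] v.
  by exists 0%N => x [c ->] k _; rewrite big_ord0 scaler0.
set v' := fun i => v (widen_ord (leqnSn n) i).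
have [N' hN'] := IH v'.
case: (pselect (exists2 c : R, c != 0 & spanned v' (c *: v ord_max))) => [[c c0 hc]|hno].
- have [_ _ hfact] := hR; have [u [j [hu ec]]] := hfact c c0.
  have hj : spanned v' (pi ^+ j *: v ord_max).
    by rewrite -[pi ^+ j](mulKr hu) -ec -scalerA; apply: spanZ.
  exists (N' + j)%N => x /spanned_recr [y [d [hy ->]]] k hk.
  rewrite exprD -scalerA; apply: (hN' _ _ k); last first.
    by rewrite scalerA mulrC -scalerA hk scaler0.
  by rewrite scalerDr scalerA mulrC -scalerA; apply: spanD; apply: spanZ.
- exists N' => x /spanned_recr [y [d [hy ->]]] k hk.
  have d0 : d = 0.
    apply/eqP; apply: contraT => d0; case: hno; exists (pi ^+ k * d).
      by rewrite mulf_neq0 ?expf_pi_neq0.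
    rewrite -scalerA (_ : pi ^+ k *: (d *: v ord_max) = - (pi ^+ k *: y)).
      exact/spanN/spanZ.
    by apply/eqP; rewrite -addr_eq0 -scalerDr addrC hk.
  by move: hk; rewrite d0 scale0r !addr0; apply: hN'.
Qed.

Lemma fin_gen_torsion_bound (pi : R) :
  is_DVR_uniformizer pi -> fin_gen E -> exists N, pi_torsion_bound pi N.
Proof.
move=> hR [n [v hv]]; have [N hN] := spanned_torsion_bound hR v.
by exists N => x k; apply: hN.
Qed.

Lemma free_of_basis n (v : 'I_n -> E) : (forall x, spanned v x) ->
  (forall c, \sum_(i < n) c i *: v i = 0 -> forall i, c i = 0) -> free_fin E.
Proof.
move=> hs hindep; pose phi (r : 'rV[R]_n) := \sum_(i < n) r 0 i *: v i.
have philin : Rlinear phi.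
  move=> a r s; rewrite /phi scaler_sumr -big_split; apply: eq_bigr => i _.
  by rewrite !mxE scalerDl scalerA.
have phi_inj : injective phi.
  move=> r s ers; apply/rowP => i; apply/eqP; rewrite -subr_eq0; apply/eqP.
  have /(_ i) : forall j, (r - s) 0 j = 0.
    by apply: hindep; rewrite -/(phi (r - s)) (RlinearB philin) ers subrr.
  by rewrite !mxE.
have /choice [psi psiK] : forall x, exists r, phi r = x.
  move=> x; have [c ->] := hs x; exists (\row_i c i).
  by apply: eq_bigr => i _; rewrite mxE.
by exists n, phi; split => //; exists psi => // r; apply: phi_inj; rewrite psiK.
Qed.

Lemma drop_dependent_generator (pi : R) : is_DVR_uniformizer pi -> torsion_free ->
  forall n (v : 'I_n.+1 -> E) (c : 'I_n.+1 -> R) i0,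
  (forall x, spanned v x) -> \sum_(i < n.+1) c i *: v i = 0 -> c i0 != 0 ->
  exists v' : 'I_n -> E, forall x, spanned v' x.
Proof.
move=> hR htf n v c i0 hs hc ci0.
have [j cj0 /choice [d hd]] := dvr_min_coef hR ci0.
have dj : d j = 1 by apply: (mulIf cj0); rewrite -hd mul1r.
have hrel : \sum_(i < n.+1) d i *: v i = 0.
  apply: (htf (c j)) => //; rewrite scaler_sumr -[RHS]hc.
  by apply: eq_bigr => i _; rewrite scalerA mulrC -hd.
exists (fun i => v (lift j i)) => x; have [e ->] := hs x.
exists (fun i => e (lift j i) - e j * d (lift j i)).
have -> : \sum_(i < n.+1) e i *: v i = \sum_(i < n.+1) (e i - e j * d i) *: v i.
  transitivity (\sum_(i < n.+1) e i *: v i - e j *: \sum_(i < n.+1) d i *: v i).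
    by rewrite hrel scaler0 subr0.
  by rewrite scaler_sumr -sumrB; apply: eq_bigr => i _; rewrite scalerBl scalerA.
by rewrite (bigD1_ord j) //= dj mulr1 subrr scale0r add0r.
Qed.

Lemma torsion_free_fin_gen_free (pi : R) :
  is_DVR_uniformizer pi -> torsion_free -> fin_gen E -> free_fin E.
Proof.
move=> hR htf [n [v]]; elim: n v => [|n IH] v hs.
  by apply: (free_of_basis hs) => c _ [].
case: (pselect (forall c, \sum_(i < n.+1) c i *: v i = 0 -> forall i, c i = 0)).
  exact: free_of_basis hs.
move=> /existsNP [c /not_implyP [hc /existsNP [i0 /eqP ci0]]].
have [v' hv'] := drop_dependent_generator hR htf hs hc ci0.
exact: IH hv'.
Qed.

End Torsion.

Section WeakLifts.
Variables (R : idomainType) (G : groupType).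

Lemma in_Rep_linear (M : lmodType R) (rho : G -> M -> M) g :
  in_Rep rho -> Rlinear (rho g).
Proof. by case=> [[]]. Qed.

Lemma weak_lift_linear (V W : lmodType R) (rhoV : G -> V -> V)
    (rhoW : G -> W -> W) (f : W -> V) :
  is_weak_lift rhoV rhoW f -> Rlinear f.
Proof. by case. Qed.

Lemma has_weak_lift_cover (V P : lmodType R) (rhoV : G -> V -> V)
    (rhoP : G -> P -> P) (p : P -> V) :
  Rlinear p -> (forall g x, p (rhoP g x) = rhoV g (p x)) ->
  (forall y, exists x, p x = y) -> has_weak_lift rhoP -> has_weak_lift rhoV.
Proof.
move=> plin peq psurj [W [rhoW [h [hW hlin heq hsurj]]]].
exists W, rhoW, (p \o h); split=> // [a x y | g x | y] /=.
- by rewrite hlin plin.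
- by rewrite heq peq.
- by have [x <-] := psurj y; have [w <-] := hsurj x; exists w.
Qed.

End WeakLifts.

Lemma reduce_map_compat (R : idomainType) (pi : R) (M N : lmodType R)
    (h : M -> N) x y :
  Rlinear h -> reduce pi x = reduce pi y -> reduce pi (h x) = reduce pi (h y).
Proof.
move=> hlin /eqP; rewrite -subr_eq0 -linearB => /eqP /reduce_eq0 [z ez].
apply/eqP; rewrite -subr_eq0 -linearB -(RlinearB hlin) ez (RlinearZ hlin).
by rewrite linearZ; apply/eqP; apply: scale_pi_mod_pi.
Qed.

Section ReductionRep.
Variables (R : idomainType) (pi : R) (G : groupType).
Variables (E : lmodType R) (rho : G -> E -> E).
Hypothesis hE : in_Rep rho.

Definition act_mod_pi g (q : mod_pi E pi) : mod_pi E pi :=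
  reduce pi (rho g (repr q)).

Lemma act_mod_pi_reduce g x : act_mod_pi g (reduce pi x) = reduce pi (rho g x).
Proof. by apply: reduce_map_compat; [exact: in_Rep_linear | rewrite reduceK]. Qed.

Lemma in_Rep_mod_pi : in_Rep act_mod_pi.
Proof.
case: hE => [[hlin h1 hmul] hfg]; split; first split.
- move=> g a q r; rewrite -[q]reduceK -[r]reduceK -linearP !act_mod_pi_reduce.
  by rewrite hlin linearP.
- by move=> q; rewrite -[q]reduceK act_mod_pi_reduce h1.
- by move=> g h q; rewrite -[q]reduceK !act_mod_pi_reduce hmul.
- apply: fin_gen_image hfg; first exact: reduce_is_linear.
  by move=> q; exists (repr q); rewrite reduceK.
Qed.

Section PullbackRep.
Variables (W : lmodType R) (rhoW : G -> W -> W) (f : W -> mod_pi E pi).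
Hypothesis hf : is_weak_lift act_mod_pi rhoW f.

Local Notation F := (linear_of (weak_lift_linear hf)).
Local Notation P := (pullback F (reduce pi)).

Lemma act_pullback_subproof g (p : P) :
  (rhoW g (val p).1, rho g (val p).2) \in pullback_pred F (reduce pi).
Proof.
have [_ _ hfeq _] := hf; case: p => [[w e]] /=; rewrite !in_pullback /= => /eqP hwe.
by rewrite hfeq hwe act_mod_pi_reduce.
Qed.

Definition act_pullback g (p : P) : P := pullback_elt (act_pullback_subproof g p).

Lemma pi_multiple_in_pullback e : (0, pi *: e) \in pullback_pred F (reduce pi).
Proof.
rewrite in_pullback /= (Rlinear0 (weak_lift_linear hf)) linearZ.
by apply/eqP/esym; apply: scale_pi_mod_pi.
Qed.

Lemma in_Rep_pullback : in_Rep act_pullback.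
Proof.
have [[[[hWlin hW1 hWmul] hWfg] _] _ _ _] := hf.
have [[hlin h1 hmul] hfg] := hE.
split; first split.
- by move=> g a p q; apply: val_inj; rewrite /= hWlin hlin.
- by move=> p; apply: val_inj; rewrite /= hW1 h1; case: p => [[]].
- by move=> g h p; apply: val_inj; rewrite /= hWmul hmul.
apply: (@fin_gen_extension _ E P W (fun e => pullback_elt (pi_multiple_in_pullback e))
          (@pullback_fst _ _ _ _ F (reduce pi))) => //.
- move=> a e e'; apply: val_inj; congr (_, _) => /=; first by rewrite scaler0 addr0.
  by rewrite scalerDr !scalerA mulrC.
- move=> w; have hw : (w, repr (f w)) \in pullback_pred F (reduce pi).
    by rewrite in_pullback /= reduceK.
  by exists (pullback_elt hw).
- case=> [[w e] hp]; rewrite /pullback_fst /= => w0; subst w.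
  have /reduce_eq0 [z ez] : reduce pi e = 0.
    by have /eqP /= <- := hp; exact: (Rlinear0 (weak_lift_linear hf)).
  by exists z; apply: val_inj; rewrite /= ez.
Qed.

Lemma pullback_torsion_bound N : is_DVR_uniformizer pi ->
  pi_torsion_bound E pi N.+1 -> pi_torsion_bound P pi N.
Proof.
move=> hR hN [[w e] hp] k /(congr1 val) [/= hw he].
have [[_ /free_torsion_free htf] _ _ _] := hf.
have w0 : w = 0 := htf _ _ (expf_pi_neq0 hR k) hw; subst w.
have /reduce_eq0 [z ez] : reduce pi e = 0.
  by have /eqP /= <- := hp; exact: (Rlinear0 (weak_lift_linear hf)).
have hz : pi ^+ N.+1 *: z = 0.
  by apply: (hN _ k.+1); rewrite exprSr -scalerA -ez.
apply: val_inj; congr (_, _) => /=; first exact: scaler0.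
by rewrite ez scalerA -exprSr.
Qed.

Lemma has_weak_lift_of_pullback : has_weak_lift act_pullback -> has_weak_lift rho.
Proof.
apply: has_weak_lift_cover (@pullback_snd_is_linear _ _ _ _ F (reduce pi)) _ _ => // e.
have [_ _ _ hsurj] := hf; have [w hw] := hsurj (reduce pi e).
have hp : (w, e) \in pullback_pred F (reduce pi) by rewrite in_pullback /= hw.
by exists (pullback_elt hp).
Qed.

End PullbackRep.

End ReductionRep.

Section Induction.
Variables (R : idomainType) (pi : R) (G : groupType).
Hypothesis hR : is_DVR_uniformizer pi.
Hypothesis lift_mod_pi : forall (V : lmodType R) (rho : G -> V -> V),
  in_Rep rho -> (forall v : V, pi *: v = 0) -> has_weak_lift rho.

Lemma has_weak_lift_of_torsion_bound N (E : lmodType R) (rho : G -> E -> E) :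
  in_Rep rho -> pi_torsion_bound E pi N -> has_weak_lift rho.
Proof.
elim: N E rho => [|N IH] E rho hE hN.
  have hfree := torsion_free_fin_gen_free hR (torsion_free_of_bound0 hR hN) hE.2.
  by exists E, rho, id; split => // y; exists y.
have [W [rhoW [f hf]]] := lift_mod_pi (in_Rep_mod_pi pi hE) (@scale_pi_mod_pi _ _ pi).
apply: (has_weak_lift_of_pullback (hf := hf)); apply: IH.
  exact: in_Rep_pullback.
exact: pullback_torsion_bound.
Qed.

End Induction.

Unset Implicit Arguments.
Theorem proposition4p4 (R : idomainType) (pi : R) (G : groupType) :
  is_DVR_uniformizer pi ->
  (forall (V : lmodType R) (rho : G -> V -> V),
      in_Rep rho -> (forall v : V, pi *: v = 0) -> has_weak_lift rho) ->
  Tannakian R G.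
Proof.
move=> hR lift_mod_pi E rho hE.
have [N hN] := fin_gen_torsion_bound hR hE.2.
exact: has_weak_lift_of_torsion_bound hR lift_mod_pi N E rho hE hN.
Qed.
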